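(* Consider the data-selling model described in the context, with network $G$, prior precision $z_0>0$ and cost $\gamma>0$. Let $C$ be a contract with common precision $z>0$ whose target set $M(C)$ is not an independent set of $G$. For $i\in M(C)$ let $m_i=|N_i\cap M(C)|$. If $$z>\min_{i\in M(C)}\frac{z_0}{1+m_i},$$ then $C$ is not an optimal contract for the seller.
   Context: Model. There is a finite set of buyers $N=\{1,\dots,n\}$ and an undirected network $G$ on $N$: for $i\neq j$, $g_{ij}=g_{ji}\in\{0,1\}$, with $g_{ij}=1$ iff $i$ and $j$ are linked. $N_i=\{j\neq i: g_{ij}=1\}$ is the set of neighbors of $i$. A state $\theta\sim N(0,1/z_0)$ with $z_0>0$ is unknown to all. A contract $C$ of the seller consists of a target set $M(C)\subseteq N$, a common precision $z>0$, and prices $p_i\ge 0$ for $i\in M(C)$ (buyers outside $M(C)$ get nothing and pay nothing). Each $i\in M(C)$ receives a signal $s_i=\theta+\varepsilon_i$, with $\varepsilon_i\sim N(0,1/z)$ independent of $\theta$ and of each other. Each buyer observes the signals of his neighbors in $M(C)$ (and his own if he is in $M(C)$) and then chooses $a_i$ to maximize $E[-(a_i-\theta)^2]$. With $m_i=|N_i\cap M(C)|$, buyer $i\in M(C)$ gets expected payoff $-\frac{1}{z_0+(m_i+1)z}-p_i$. Buyer $i\in M(C)$ accepts iff $p_i\le \frac{1}{z_0+m_iz}-\frac{1}{z_0+(m_i+1)z}$. A contract is feasible if every $i\in M(C)$ accepts. The seller's profit is $\pi(C)=\sum_{i\in M(C)}p_i-\gamma z$ with $\gamma>0$. An optimal contract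 is a feasible contract maximizing $\pi$. An independent set of $G$ is a set of nodes no two of which are linked. *)

From HB Require Import structures.
From mathcomp Require Import all_boot all_order all_algebra.
From mathcomp Require Import reals.
Set Implicit Arguments. Unset Strict Implicit. Unset Printing Implicit Defensive.
Import Order.TTheory GRing.Theory Num.Theory.
Local Open Scope ring_scope.

Section Model.
Variables (R : realType) (n : nat).

Record contract := Contract {
  target : {set 'I_n};
  prec : R;
  price : 'I_n -> R
}.

Definition simple_graph (g : rel 'I_n) : Prop :=
  symmetric g /\ irreflexive g.

Definition nbrs (g : rel 'I_n) (i : 'I_n) : {set 'I_n} :=
  [set j | (j != i) && g i j].

Definition m_in (g : rel 'I_n) (M : {set 'I_n}) (i : 'I_n) : nat :=
  #|nbrs g i :&: M|.

(* value of one extra signal to buyer i *)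
Definition accept_bound (z0 : R) (g : rel 'I_n) (C : contract) (i : 'I_n) : R :=
  let m := (m_in g (target C) i)%:R in
  (z0 + m * prec C)^-1 - (z0 + (m + 1) * prec C)^-1.

Definition feasible (z0 : R) (g : rel 'I_n) (C : contract) : Prop :=
  0 < prec C /\
  forall i, i \in target C -> 0 <= price C i /\ price C i <= accept_bound z0 g C i.

Definition profit (gamma : R) (C : contract) : R :=
  \sum_(i in target C) price C i - gamma * prec C.

Definition optimal (z0 gamma : R) (g : rel 'I_n) (C : contract) : Prop :=
  feasible z0 g C /\
  forall C', feasible z0 g C' -> profit gamma C' <= profit gamma C.

Definition independent (g : rel 'I_n) (S : {set 'I_n}) : Prop :=
  forall i j, i \in S -> j \in S -> ~~ g i j.

End Model.

(* A feasible contract earns at most the profit of the contract with the same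
   target set and precision that charges every buyer his full willingness to
   pay, the value of one more signal.  If the target set contains an edge, let
   [i] be a targeted buyer with the largest number [D >= 1] of targeted
   neighbours, and drop him.  The seller loses [i]'s payment, but each of the
   [D] targeted neighbours of [i] now observes one signal fewer and values his
   own signal more.  The closed forms of these values show that, once
   [z > z0 / (1 + D)], each such increase exceeds [1/D] of [i]'s payment, so
   profit strictly increases. *)

From HB Require Import structures.
From mathcomp Require Import all_boot all_order all_algebra.
From mathcomp Require Import reals ring lra.
Set Implicit Arguments. Unset Strict Implicit. Unset Printing Implicit Defensive.
Import Order.TTheory GRing.Theory Num.Theory.
Local Open Scope ring_scope.

Section SignalValue.
Variables (R : realFieldType) (z0 z : R).

Definition signal_value (k : R) : R := (z0 + k * z)^-1 - (z0 + (k + 1) * z)^-1.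

Lemma signal_valueE (k : R) : 0 < z0 -> 0 <= z -> 0 <= k ->
  signal_value k = z / ((z0 + k * z) * (z0 + k * z + z)).
Proof.
move=> z0_gt0 z_ge0 k_ge0; have kz_ge0 : 0 <= k * z by rewrite mulr_ge0.
rewrite /signal_value (_ : z0 + (k + 1) * z = z0 + k * z + z); last by ring.
by field; rewrite !gt_eqF //; lra.
Qed.

Lemma signal_value_ge0 (k : R) : 0 < z0 -> 0 <= z -> 0 <= k -> 0 <= signal_value k.
Proof.
move=> z0_gt0 z_ge0 k_ge0; have kz_ge0 : 0 <= k * z by rewrite mulr_ge0.
by rewrite signal_valueE // divr_ge0 // mulr_ge0 //; lra.
Qed.

Lemma signal_value_decrementE (k : R) : 0 < z0 -> 0 <= z -> 0 <= k ->
  signal_value k - signal_value (k + 1) =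
  2 * z ^+ 2 / ((z0 + k * z) * (z0 + k * z + z) * (z0 + k * z + 2 * z)).
Proof.
move=> z0_gt0 z_ge0 k_ge0; rewrite !signal_valueE ?addr_ge0 //.
set u := z0 + k * z; have u_gt0 : 0 < u by rewrite /u ltr_wpDr ?mulr_ge0.
have -> : z0 + (k + 1) * z = u + z by rewrite /u; ring.
by field; rewrite !gt_eqF //; lra.
Qed.

Lemma signal_value_avg_lt_decrement (k d : R) : 0 < z0 -> 0 <= k -> k + 1 <= d ->
  z0 < (1 + d) * z -> signal_value d / d < signal_value k - signal_value (k + 1).
Proof.
move=> z0_gt0 k_ge0 kd z_large.
have d_gt0 : 0 < d by lra.
have z_gt0 : 0 < z by rewrite -(pmulr_rgt0 _ (_ : 0 < 1 + d)); lra.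
rewrite signal_value_decrementE ?signal_valueE ?(ltW z_gt0) ?(ltW d_gt0) //.
set u := z0 + k * z; set v := z0 + d * z.
have u_gt0 : 0 < u by rewrite /u; nra.
have v_gt0 : 0 < v by rewrite /v; nra.
have cubic_le : u * (u + z) * (u + 2 * z) <= (v - z) * v * (v + z).
  have uv : u <= v - z by rewrite /u /v; nra.
  by apply: ler_pM; [nra | nra | apply: ler_pM; lra | lra].
have cubic_lt : u * (u + z) * (u + 2 * z) < 2 * z * (v * (v + z) * d).
  have vd : v - z < 2 * z * d by rewrite /v; nra.
  apply: (le_lt_trans cubic_le).
  rewrite -mulrA (_ : 2 * z * _ = 2 * z * d * (v * (v + z))); last by ring.
  by rewrite ltr_pM2r // mulr_gt0 // addr_gt0.
have W_gt0 : 0 < v * (v + z) * d by rewrite !mulr_gt0 // addr_gt0.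
have U_gt0 : 0 < u * (u + z) * (u + 2 * z) by rewrite !mulr_gt0 //; lra.
rewrite -mulrA -invfM ltr_pdivrMr // mulrAC ltr_pdivlMr //.
rewrite (_ : _ * (v * (v + z) * d) = z * (2 * z * (v * (v + z) * d))); last by ring.
by rewrite ltr_pM2l.
Qed.

End SignalValue.

Section Network.
Variables (n : nat) (g : rel 'I_n).

Lemma mem_nbrsC i j : symmetric g -> (i \in nbrs g j) = (j \in nbrs g i).
Proof. by move=> g_sym; rewrite !inE eq_sym g_sym. Qed.

Lemma m_in_setD1 (S : {set 'I_n}) i j :
  m_in g S j = ((i \in nbrs g j :&: S) + m_in g (S :\ i) j)%N.
Proof. by rewrite /m_in setIDA; apply: cardsD1. Qed.

Lemma not_independent_m_in_gt0 (S : {set 'I_n}) : simple_graph g ->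
  ~ independent g S -> exists2 j, j \in S & (0 < m_in g S j)%N.
Proof.
move=> [_ g_irr] S_dep.
have [[j k] /= /and3P[jS kS gjk] | no_edge] :=
  pickP (fun p : 'I_n * 'I_n => [&& p.1 \in S, p.2 \in S & g p.1 p.2]); last first.
  case: S_dep => j k jS kS; apply/negP => gjk.
  by move: (no_edge (j, k)); rewrite /= jS kS gjk.
exists j => //; rewrite card_gt0; apply/set0Pn; exists k.
by rewrite !inE kS gjk !andbT; apply: contraTneq gjk => ->; rewrite g_irr.
Qed.

Lemma sum_m_in_setD1 (V : zmodType) (F : nat -> V) (S : {set 'I_n}) i :
  symmetric g -> i \in S ->
  \sum_(j in S :\ i) (F (m_in g (S :\ i) j) - F (m_in g S j)) =
  \sum_(j in nbrs g i :&: S) (F (m_in g (S :\ i) j) - F (m_in g (S :\ i) j).+1).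
Proof.
move=> g_sym iS; pose N := nbrs g i :&: S.
have NT : N \subset S :\ i.
  by apply/subsetP => j; rewrite !inE => /andP[/andP[-> _] ->].
rewrite (big_setID N) /= (setIidPr NT) [X in _ + X]big1 ?addr0 => [|j].
  apply: eq_bigr => j jN; rewrite (m_in_setD1 S i j) inE mem_nbrsC //.
  by move: jN; rewrite inE => /andP[-> _]; rewrite iS.
move=> /setDP[/setD1P[_ jS]]; rewrite inE jS andbT => /negbTE jN.
by rewrite (m_in_setD1 S i j) inE mem_nbrsC // jN subrr.
Qed.

End Network.

Section FullPriceContract.
Variables (R : realType) (n : nat) (g : rel 'I_n) (z0 gamma : R).

Definition full_price_contract (M : {set 'I_n}) (z : R) : contract R n :=
  Contract M z (fun i => signal_value z0 z (m_in g M i)%:R).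

Lemma full_price_contract_feasible (M : {set 'I_n}) (z : R) : 0 < z0 -> 0 < z ->
  feasible z0 g (full_price_contract M z).
Proof.
move=> z0_gt0 z_gt0; split=> // i _; split=> //.
exact: signal_value_ge0 (ltW z_gt0) (ler0n _ _).
Qed.

Lemma profit_le_full_price (C : contract R n) : feasible z0 g C ->
  profit gamma C <= profit gamma (full_price_contract (target C) (prec C)).
Proof. by move=> [_ acc]; rewrite lerD2r; apply: ler_sum => i /acc[]. Qed.

Lemma full_price_profit_lt_setD1 (S : {set 'I_n}) i (z : R) :
  symmetric g -> 0 < z0 -> i \in S ->
  (forall j, j \in S -> m_in g S j <= m_in g S i)%N -> (0 < m_in g S i)%N ->
  z0 < (1 + (m_in g S i)%:R) * z ->
  profit gamma (full_price_contract S z) < profit gamma (full_price_contract (S :\ i) z).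
Proof.
move=> g_sym z0_gt0 iS i_max D_gt0 z_large.
pose sv k := signal_value z0 z k%:R; pose D := m_in g S i; pose N := nbrs g i :&: S.
rewrite /profit ltrD2r /= (big_setD1 i iS) /=.
suff gain : sv D < \sum_(j in S :\ i) (sv (m_in g (S :\ i) j) - sv (m_in g S j)).
  by rewrite sumrB in gain; rewrite -/(sv D); lra.
rewrite sum_m_in_setD1 //.
have D_neq0 : D%:R != 0 :> R by rewrite pnatr_eq0 -lt0n.
have -> : sv D = \sum_(j in N) sv D / D%:R.
  by rewrite sumr_const -mulr_natr; field.
apply: ltr_sum => [|j jN].
  by move: D_gt0; rewrite card_gt0 => /set0Pn[j jN]; apply/hasP; exists j.
have /setIP[j_nbr jS] := jN.
have := i_max j jS.
rewrite (m_in_setD1 g S i j) inE mem_nbrsC // j_nbr iS => lt_jD.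
rewrite /sv -natr1; apply: signal_value_avg_lt_decrement => //.
by rewrite natr1 ler_nat.
Qed.

End FullPriceContract.

Theorem proposition1 (R : realType) (n : nat) (g : rel 'I_n) (z0 gamma : R)
  (C : contract R n) :
  simple_graph g -> 0 < z0 -> 0 < gamma -> 0 < prec C ->
  ~ independent g (target C) ->
  (* z > min_{i in M(C)} z0 / (1 + m_i) *)
  (exists2 i, i \in target C & z0 / (1 + (m_in g (target C) i)%:R) < prec C) ->
  ~ optimal z0 gamma g C.
Proof.
move=> g_simple z0_gt0 _ z_gt0 S_dep [i0 i0S z_large] [C_feas C_opt].
set S := target C in S_dep i0S z_large C_opt.
have [i iS i_max] := arg_maxnP (m_in g S) i0S.
have [j jS mj_gt0] := not_independent_m_in_gt0 g_simple S_dep.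
have D_gt0 : (0 < m_in g S i)%N := leq_trans mj_gt0 (i_max j jS).
have zi_large : z0 < (1 + (m_in g S i)%:R) * prec C.
  rewrite ltr_pdivrMr ?ltr_wpDr // mulrC in z_large.
  by apply: (lt_le_trans z_large); rewrite ler_pM2r // lerD2l ler_nat; apply: i_max.
have := C_opt _ (full_price_contract_feasible g (S :\ i) z0_gt0 z_gt0).
rewrite leNgt => /negP; apply.
apply: le_lt_trans (profit_le_full_price gamma C_feas) _.
exact: full_price_profit_lt_setD1 g_simple.1 z0_gt0 iS i_max D_gt0 zi_large.
Qed.
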